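(* Let $k\geq 1$ be an integer and let $B\in M_{4k+1}(\mathbb{F}_2)$ be a non-derogative matrix. Then there exist $N,D\in M_{4k+1}(\mathbb{F}_2)$ with $B=N+D$, $N^2=0$ and $D^4=D$.
   Context: A square matrix is non-derogative if its minimal polynomial equals its characteristic polynomial. $\mathbb{F}_2$ denotes the field with two elements. *)

From mathcomp Require Import all_boot all_order all_algebra.
Set Implicit Arguments. Unset Strict Implicit. Unset Printing Implicit Defensive.
Import GRing.Theory.
Local Open Scope ring_scope.

Definition non_derogative (F : fieldType) (n : nat) (A : 'M[F]_n.+1) : Prop :=
  mxminpoly A = char_poly A.

(* Since [B] is non-derogatory, some row vector [v] has local minimal
   polynomial [char_poly B] (combine vectors whose annihilators are coprime),
   so the vectors [v *m p_m(B)], [m <= 4k], form a basis for any family of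
   polynomials [p_m] of degree [m].  Take [p_(4j+r) = ('X^4 + 'X)^j 'X^r].
   In characteristic 2, multiplication by ['X] maps [p_m] to [p_(m+1)], except
   [p_(4j+3)] to [p_(4j+4) + p_(4j+1)], and [p_(4k)] to some arbitrary vector.
   This matrix splits as [N + D]: [N] squares to zero, and [D] consists of 4x4
   diagonal blocks that are roots of ['X^2 + 'X + 1], plus an arbitrary last
   row.  Such a [D] is a root of [('X^2 + 'X + 1) ('X - c)] with [c] in [F_2],
   which divides ['X^4 - 'X]. *)

From mathcomp Require Import all_boot all_order all_algebra.
From mathcomp Require Import zify ring.
From Stdlib Require Import Classical.
Set Implicit Arguments. Unset Strict Implicit. Unset Printing Implicit Defensive.
Import GRing.Theory.
Local Open Scope ring_scope.

Lemma horner_mxM (R : comNzRingType) n (A : 'M[R]_n.+1) (p q : {poly R}) :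
  horner_mx A (p * q) = horner_mx A p *m horner_mx A q.
Proof. exact: rmorphM. Qed.

Section PolyLcm.
Variable F : fieldType.

(* [a1] keeps the primes where [a] has the larger multiplicity, [b1] the
   others; [gdcop] extracts these parts through [h = a / gcd(a, b)]. *)
Lemma coprime_lcm_factors (a b : {poly F}) : a != 0 -> b != 0 ->
  exists a1 a2 b1 b2, [/\ a = a1 * a2, b = b1 * b2, coprimep a1 b1,
     a %| a1 * b1 & b %| a1 * b1].
Proof.
move=> a0 b0; set g := gcdp a b.
have ha : a = (a %/ g) * g by rewrite divpK ?dvdp_gcdl.
have hb : b = (b %/ g) * g by rewrite divpK ?dvdp_gcdr.
set h := a %/ g in ha *; set h' := b %/ g in hb *.
have h0 : h != 0 by apply: contraNneq a0 => h0; rewrite ha h0 mul0r.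
have hh' : coprimep h h' by apply: coprimep_div_gcd; rewrite a0.
set c := gdcop h a; set b1 := gdcop h b.
have cH : coprimep c h := coprimep_gdco h a0.
have b1H : coprimep b1 h := coprimep_gdco h b0.
have /dvdpP[a1 ea] : c %| a := dvdp_gdco h a.
have /dvdpP[b2 eb] : b1 %| b := dvdp_gdco h b.
have c0 : c != 0 by apply: contraNneq a0 => c0; rewrite ea c0 mulr0.
have b10 : b1 != 0 by apply: contraNneq b0 => e0; rewrite eb e0 mulr0.
have a1H : a1 %| h ^+ size a.
  by rewrite -(@dvdp_mul2l _ c) // mulrC -ea dvdp_gdcor.
have b2H : b2 %| h ^+ size b.
  by rewrite -(@dvdp_mul2l _ b1) // mulrC -eb dvdp_gdcor.
have a1b1 : coprimep a1 b1.
  by rewrite coprimep_sym (coprimep_dvdl a1H) ?coprimep_expr.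
have cb2 : coprimep c b2 by rewrite (coprimep_dvdl b2H) ?coprimep_expr.
have b2g : b2 %| g.
  have b2h' : coprimep b2 h' by rewrite (coprimep_dvdr b2H) ?coprimep_expl.
  by rewrite -(Gauss_dvdpr _ b2h') -hb eb dvdp_mulIl.
have b2a1 : b2 %| a1.
  have b2c : coprimep b2 c by rewrite coprimep_sym.
  by rewrite -(Gauss_dvdpl _ b2c) -ea (dvdp_trans b2g) ?dvdp_gcdl.
have cb1 : c %| b1.
  have cg : c %| g by rewrite -(Gauss_dvdpr _ cH) -ha dvdp_gdco.
  by rewrite -(Gauss_dvdpr _ cb2) -eb (dvdp_trans cg) ?dvdp_gcdr.
exists a1, c, b1, b2; split => //.
- by rewrite eb mulrC.
- by rewrite [X in X %| _]ea; apply: dvdp_mul.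
- by rewrite [X in X %| _]eb; apply: dvdp_mul.
Qed.

End PolyLcm.

Section RowAnnihilator.
Variables (F : fieldType) (n : nat) (A : 'M[F]_n.+1).
Implicit Types (u w : 'rV[F]_n.+1) (a b p q : {poly F}).

(* [a] generates the ideal of polynomials [q] with [u *m q(A) = 0]; it is the
   local minimal polynomial of [u], up to a unit. *)
Definition row_ann u a :=
  forall q, (u *m horner_mx A q == 0) = (a %| q).

Lemma mulmx_horner_dvdp u a q :
  a %| q -> u *m horner_mx A a = 0 -> u *m horner_mx A q = 0.
Proof. by case/dvdpP=> r -> ua; rewrite mulrC horner_mxM mulmxA ua mul0mx. Qed.

Lemma row_ann_exists u : exists2 a, a != 0 & row_ann u a.
Proof.
suff ann_below s q : (size q < s)%N -> q != 0 -> u *m horner_mx A q = 0 ->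
    exists2 a, a != 0 & row_ann u a.
  apply: (ann_below _ (mxminpoly A) (ltnSn _)).
    by rewrite monic_neq0 ?mxminpoly_monic.
  by rewrite mx_root_minpoly mulmx0.
elim: s q => [|s IH] q // sq q0 uq.
have [q_gen | not_gen] := classic (forall r, u *m horner_mx A r = 0 -> q %| r).
  exists q => // r; apply/idP/idP => [/eqP/q_gen // | qr].
  by apply/eqP; apply: mulmx_horner_dvdp qr uq.
have [r not_r] := not_all_ex_not _ _ not_gen.
have [ur q_r] := imply_to_and _ _ not_r.
apply: (IH (r %% q)).
- by rewrite -ltnS (leq_trans _ sq) // ltnS ltn_modp.
- by apply/eqP => /modp_eq0P.
- have := congr1 (fun p => u *m horner_mx A p) (divp_eq r q).
  rewrite rmorphD mulmxDr ur (mulmx_horner_dvdp (dvdp_mull _ (dvdpp q))) //.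
  by rewrite add0r.
Qed.

Lemma row_ann_mulr u a b :
  b != 0 -> row_ann u (a * b) -> row_ann (u *m horner_mx A b) a.
Proof. by move=> b0 uab q; rewrite -mulmxA -horner_mxM uab mulrC dvdp_mul2l. Qed.

Lemma row_ann_add u w a b : coprimep a b ->
  row_ann u a -> row_ann w b -> row_ann (u + w) (a * b).
Proof.
have dvd_of_sum u' w' a' b' q : coprimep a' b' -> row_ann u' a' -> row_ann w' b' ->
    u' *m horner_mx A q + w' *m horner_mx A q = 0 -> a' %| q.
  move=> cab ua wb uwq; rewrite -(Gauss_dvdpl _ cab) -ua horner_mxM mulmxA.
  rewrite -[u' *m _]opprK (addr0_eq uwq) mulNmx -mulmxA -horner_mxM mulrC.
  by rewrite oppr_eq0 wb dvdp_mulIl.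
move=> cab ua wb q; rewrite mulmxDl Gauss_dvdp //.
apply/eqP/andP => [uwq | [aq bq]].
  have cba : coprimep b a by rewrite coprimep_sym.
  rewrite (dvd_of_sum _ _ _ _ _ cab ua wb) //.
  by rewrite (dvd_of_sum _ _ _ _ _ cba wb ua) // addrC.
by move: aq bq; rewrite -ua -wb => /eqP-> /eqP->; rewrite addr0.
Qed.

Lemma row_ann_lcm u w a b : a != 0 -> b != 0 -> row_ann u a -> row_ann w b ->
  exists z c, [/\ c != 0, row_ann z c, a %| c & b %| c].
Proof.
move=> a0 b0 ua wb.
have [a1 [a2 [b1 [b2 [ea eb a1b1 ac bc]]]]] := coprime_lcm_factors a0 b0.
have /norP[a10 a20] : ~~ ((a1 == 0) || (a2 == 0)) by rewrite -mulf_eq0 -ea.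
have /norP[b10 b20] : ~~ ((b1 == 0) || (b2 == 0)) by rewrite -mulf_eq0 -eb.
exists (u *m horner_mx A a2 + w *m horner_mx A b2), (a1 * b1).
split=> //; first by rewrite mulf_neq0.
by apply: row_ann_add => //; apply: row_ann_mulr; rewrite // -?ea -?eb.
Qed.

Lemma row_ann_minpoly : exists v, row_ann v (mxminpoly A).
Proof.
suff [v [a [a0 va Aa]]] : exists v a, [/\ a != 0, row_ann v a & horner_mx A a = 0].
  exists v => q; rewrite va; apply: eqp_dvdl.
  by rewrite /eqp mxminpoly_min // andbT -va mx_root_minpoly mulmx0.
suff rows_below j : (j <= n.+1)%N -> exists v a, [/\ a != 0, row_ann v a &
    forall i : 'I_n.+1, (i < j)%N -> row i (horner_mx A a) = 0].
  have [v [a [a0 va rows0]]] := rows_below _ (leqnn _).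
  by exists v, a; split=> //; apply/row_matrixP => i; rewrite row0 rows0.
elim: j => [_|j IH ltjn].
  exists 0, 1; split=> [||i //]; first exact: oner_neq0.
  by move=> q; rewrite mul0mx eqxx dvd1p.
have [v [a [a0 va rows0]]] := IH (ltnW ltjn).
have [b b0 eb] := row_ann_exists (delta_mx 0 (Ordinal ltjn)).
have [z [c [c0 zc ac bc]]] := row_ann_lcm a0 b0 va eb.
exists z, c; split=> // i; rewrite ltnS leq_eqVlt => /predU1P[eij | ltij].
  rewrite rowE (mulmx_horner_dvdp bc) //; apply/eqP.
  by rewrite (_ : i = Ordinal ltjn) ?eb ?dvdpp //; apply/val_inj.
by rewrite rowE (mulmx_horner_dvdp ac) // -rowE rows0.
Qed.

End RowAnnihilator.

Lemma graded_poly_free (F : fieldType) (p : nat -> {poly F}) (c : nat -> F) m :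
  (forall i, size (p i) = i.+1) -> \sum_(i < m) c i *: p i = 0 ->
  forall i, (i < m)%N -> c i = 0.
Proof.
move=> size_p; elim: m => // m IH; rewrite big_ord_recr /= => sum0.
have cm0 : c m = 0.
  have := congr1 (fun q : {poly F} => q`_m) sum0.
  rewrite coef0 coefD coefZ coef_sum big1.
    rewrite add0r => /eqP; rewrite mulf_eq0 => /predU1P[// | /eqP pm0].
    have : lead_coef (p m) != 0 by rewrite lead_coef_eq0 -size_poly_eq0 size_p.
    by rewrite lead_coefE size_p pm0 eqxx.
  by move=> i _; rewrite coefZ nth_default ?mulr0 // size_p.
move: sum0; rewrite cm0 scale0r addr0 => /IH c0 i; rewrite ltnS leq_eqVlt.
by case/predU1P=> [-> | /c0].
Qed.

Section KrylovBasis.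
Variables (F : fieldType) (n : nat) (A : 'M[F]_n.+1).

Definition krylov_mx (v : 'rV[F]_n.+1) (p : nat -> {poly F}) : 'M[F]_n.+1 :=
  \matrix_(i < n.+1) (v *m horner_mx A (p i)).

Lemma krylov_mx_unit v (p : nat -> {poly F}) :
  non_derogative A -> row_ann A v (mxminpoly A) ->
  (forall i, size (p i) = i.+1) -> krylov_mx v p \in unitmx.
Proof.
move=> nd va size_p; rewrite -row_free_unit -kermx_eq0.
apply/rowV0P => c /sub_kermxP cK.
pose q := \sum_(i < n.+1) c 0 i *: p i.
have cq : c *m krylov_mx v p = v *m horner_mx A q.
  rewrite mulmx_sum_row linear_sum mulmx_sumr; apply: eq_bigr => i _.
  by rewrite rowK linearZ scalemxAr.
have size_q : (size q <= n.+1)%N.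
  apply/leq_sizeP => j lenj; rewrite coef_sum big1 // => i _.
  by rewrite coefZ nth_default ?mulr0 // size_p (leq_trans _ lenj).
have q0 : q = 0.
  apply/eqP; apply: contraTT size_q => q_nz; rewrite -ltnNge.
  have : mxminpoly A %| q by rewrite -va -cq cK.
  by move/(dvdp_leq q_nz); rewrite nd size_char_poly.
apply/rowP => i; rewrite mxE -[i]inord_val.
apply: (graded_poly_free (c := fun j => c 0 (inord j)) size_p) => //.
by rewrite -[RHS]q0; apply: eq_bigr => j _; rewrite inord_val.
Qed.

End KrylovBasis.

(* Only the rows of [p(D)] other than the last one need to vanish: the last
   row of [D - c] then has a zero last coordinate, so it is killed by [p(D)]. *)
Lemma horner_mx_last_row (R : comNzRingType) m (D : 'M[R]_m.+1) (p : {poly R}) :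
  (forall i, i != ord_max -> row i (horner_mx D p) = 0) ->
  horner_mx D (p * ('X - (D ord_max ord_max)%:P)) = 0.
Proof.
move=> rows0; set c := D ord_max ord_max.
have row_kill (x : 'rV_m.+1) : x 0 ord_max = 0 -> x *m horner_mx D p = 0.
  move=> x0; rewrite mulmx_sum_row big1 // => i _.
  by case: (eqVneq i ord_max) => [->|/rows0->]; rewrite ?x0 ?scale0r ?scaler0.
apply/row_matrixP => i; rewrite row0.
case: (eqVneq i ord_max) => [->|/rows0 rowi0].
  by rewrite mulrC horner_mxM row_mul row_kill // rmorphB /= horner_mx_X
             horner_mx_C !mxE eqxx mulr1n subrr.
by rewrite horner_mxM row_mul rowi0 mul0mx.
Qed.

Lemma F2_mx_pow4 m (D : 'M['F_2]_m.+1) :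
  (forall i, i != ord_max -> row i (horner_mx D ('X^2 + 'X + 1)) = 0) ->
  D ^+ 4 = D.
Proof.
move/horner_mx_last_row; set c := D _ _ => Dc.
have : ('X^2 + 'X + 1) * ('X - c%:P) %| 'X^4 - 'X.
  have F2_cases (x : 'F_2) : x = 0 \/ x = 1.
    by case: x => [[|[|]]] // ?; [left|right]; apply/val_inj.
  have [->|->] := F2_cases c.
    by apply/dvdpP; exists ('X - 1); rewrite polyC0; ring.
  by apply/dvdpP; exists 'X; rewrite polyC1; ring.
case/dvdpP=> r /(congr1 (horner_mx D)); rewrite rmorphM /= Dc mulr0.
by rewrite rmorphB rmorphXn /= horner_mx_X => /eqP; rewrite subr_eq0 => /eqP.
Qed.

Lemma horner_mx_intertwine (R : comNzRingType) m n (X : 'M[R]_(m.+1, n.+1))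
    (A : 'M[R]_n.+1) (C : 'M[R]_m.+1) (p : {poly R}) :
  X *m A = C *m X -> X *m horner_mx A p = horner_mx C p *m X.
Proof.
move=> XA; elim/poly_ind: p => [|p c IH]; first by rewrite !rmorph0 mulmx0 mul0mx.
rewrite !rmorphD /= !horner_mxM !horner_mx_X !horner_mx_C mulmxDr mulmxDl.
by rewrite mulmxA IH -!mulmxA XA scalar_mxC.
Qed.

Lemma invmx_conj_exp (F : fieldType) n (P M : 'M[F]_n.+1) e : P \in unitmx ->
  (invmx P *m M *m P) ^+ e = invmx P *m M ^+ e *m P.
Proof.
by move=> Pu; have := horner_mx_uconjC 'X^e M Pu; rewrite !rmorphXn /= !horner_mx_X.
Qed.

Lemma row_inordP (R : pzSemiRingType) n p (X Y : 'M[R]_(n.+1, p)) :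
  (forall m, (m <= n)%N ->
     (delta_mx 0 (inord m) : 'rV_n.+1) *m X = delta_mx 0 (inord m) *m Y) ->
  X = Y.
Proof.
move=> eXY; apply/row_matrixP => i; rewrite !rowE -(inord_val i) eXY //.
by rewrite -ltnS.
Qed.

Definition bpoly (m : nat) : {poly 'F_2} := ('X^4 + 'X) ^+ (m %/ 4) * 'X^(m %% 4).

Lemma size_bpoly m : size (bpoly m) = m.+1.
Proof.
have size_r : size ('X^4 + 'X : {poly 'F_2}) = 5%N.
  by rewrite size_polyDl ?size_polyXn ?size_polyX.
have r_nz : ('X^4 + 'X : {poly 'F_2}) ^+ (m %/ 4) != 0.
  by rewrite expf_neq0 // -size_poly_eq0 size_r.
rewrite /bpoly size_mulXn //.
move: (size_exp ('X^4 + 'X : {poly 'F_2}) (m %/ 4)) r_nz.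
rewrite size_r -size_poly_eq0; case: (size _) => //= s -> _.
by have := divn_eq m 4; have := ltn_pmod m (isT : (0 < 4)%N); lia.
Qed.

Lemma bpolyE j r : (r < 4)%N -> bpoly (4 * j + r) = ('X^4 + 'X) ^+ j * 'X^r.
Proof.
move=> lt_r4; rewrite /bpoly.
have -> : ((4 * j + r) %/ 4 = j)%N by lia.
by have -> : ((4 * j + r) %% 4 = r)%N by lia.
Qed.

Lemma bpoly_mulX j r : (r < 3)%N -> bpoly (4 * j + r) * 'X = bpoly (4 * j + r.+1).
Proof. by move=> lt_r3; rewrite !bpolyE ?(ltn_trans lt_r3) // -mulrA -exprSr. Qed.

Lemma bpoly_mulX3 j : bpoly (4 * j + 3) * 'X = bpoly (4 * j + 4) + bpoly (4 * j + 1).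
Proof.
rewrite (_ : 4 * j + 4 = 4 * j.+1 + 0)%N; last by lia.
rewrite !bpolyE // expr0 mulr1 expr1 [_ ^+ j.+1]exprSr -mulrA -exprSr -mulrDr.
congr (_ * _).
by rewrite -addrA addrr_pchar2 ?addr0 // pchar_poly pchar_Fp.
Qed.

Definition mx5 (s : seq (seq nat)) : 'M['F_2]_5 :=
  \matrix_(i, j) (nth 0 (nth [::] s i) j)%:R.

(* The first four rows of [X5] give multiplication by ['X] on the basis
   [bpoly (4j + l)], [l < 5]; [N5] and [D5] are the two parts of the
   splitting, and [I5] projects onto the first four coordinates. *)
Definition X5 := mx5 [:: [:: 0; 1; 0; 0; 0]; [:: 0; 0; 1; 0; 0];
  [:: 0; 0; 0; 1; 0]; [:: 0; 1; 0; 0; 1]; [:: 0; 0; 0; 0; 0]].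
Definition D5 := mx5 [:: [:: 0; 1; 0; 0; 0]; [:: 1; 1; 0; 0; 0];
  [:: 1; 1; 1; 1; 0]; [:: 1; 0; 1; 0; 0]; [:: 0; 0; 0; 0; 0]].
Definition N5 := mx5 [:: [:: 0; 0; 0; 0; 0]; [:: 1; 1; 1; 0; 0];
  [:: 1; 1; 1; 0; 0]; [:: 1; 1; 1; 0; 1]; [:: 0; 0; 0; 0; 0]].
Definition I5 := mx5 [:: [:: 1; 0; 0; 0; 0]; [:: 0; 1; 0; 0; 0];
  [:: 0; 0; 1; 0; 0]; [:: 0; 0; 0; 1; 0]; [:: 0; 0; 0; 0; 0]].
Definition e5 (r : nat) : 'rV['F_2]_5 := \row_(j < 5) (j == r :> nat)%:R.

Lemma e5E (l : 'I_5) : e5 l = delta_mx 0 l.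
Proof. by apply/rowP => j; rewrite !mxE eqxx. Qed.

Lemma F2_add11 : (1 + 1 : 'F_2) = 0. Proof. exact: val_inj. Qed.

Ltac mx5_compute := apply/matrixP; intros i j;
  rewrite !mxE ?big_ord_recl ?big_ord0 ?mxE; revert i j;
  case=> [[|[|[|[|[|?]]]]] ?]; case=> [[|[|[|[|[|?]]]]] ?] //=;
  rewrite ?(mul0r, mul1r, mulr0, mulr1, add0r, addr0, F2_add11) //.

Ltac rv5_compute := apply/rowP; case=> [[|[|[|[|[|?]]]]] ?] //;
  rewrite !mxE ?big_ord_recl ?big_ord0 ?mxE /=;
  rewrite ?(mul0r, mul1r, mulr0, mulr1, add0r, addr0, F2_add11) //.

Lemma N5D5 : N5 + D5 = X5. Proof. mx5_compute. Qed.
Lemma N5_sqr : N5 *m N5 = 0. Proof. mx5_compute. Qed.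
Lemma D5_sqr : D5 *m D5 = D5 + I5. Proof. mx5_compute. Qed.
Lemma I5_idem : I5 *m I5 = I5. Proof. mx5_compute. Qed.
Lemma D5I5 : D5 *m I5 = D5. Proof. mx5_compute. Qed.

Lemma e5_I5 r : (r < 4)%N -> e5 r *m I5 = e5 r.
Proof. by case: r => [|[|[|[|]]]] // _; rv5_compute. Qed.
Lemma e5_4_I5 : e5 4 *m I5 = 0. Proof. rv5_compute. Qed.
Lemma e5_4_D5 : e5 4 *m D5 = 0. Proof. rv5_compute. Qed.
Lemma e5_0_N5 : e5 0 *m N5 = 0. Proof. rv5_compute. Qed.
Lemma e5_4_N5 : e5 4 *m N5 = 0. Proof. rv5_compute. Qed.
Lemma e5_0_X5 : e5 0 *m X5 = e5 1. Proof. rv5_compute. Qed.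
Lemma e5_1_X5 : e5 1 *m X5 = e5 2. Proof. rv5_compute. Qed.
Lemma e5_2_X5 : e5 2 *m X5 = e5 3. Proof. rv5_compute. Qed.
Lemma e5_3_X5 : e5 3 *m X5 = e5 1 + e5 4. Proof. rv5_compute. Qed.

Lemma D5_rows_root r : (r < 4)%N -> e5 r *m horner_mx D5 ('X^2 + 'X + 1) = 0.
Proof.
move=> lt_r4; rewrite -(e5_I5 lt_r4) -mulmxA !rmorphD rmorphXn /= horner_mx_X rmorph1.
have twice0 (M : 'M['F_2]_5) : M + M = 0.
  by apply/matrixP => i j; rewrite !mxE addrr_pchar2 // pchar_Fp.
rewrite expr2 -mulmxE D5_sqr -!addrA [I5 + _]addrC !addrA twice0 add0r.
by rewrite mulmxDr mulmx1 I5_idem twice0 mulmx0.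
Qed.

Section BlockDecomposition.
Variable k : nat.
Local Notation n := (4 * k)%N.
Local Notation e m := (delta_mx 0 (inord m) : 'rV['F_2]_n.+1).

Definition blk (b : nat) : 'M['F_2]_(5, n.+1) := \matrix_(l < 5) e (b + l).

(* Rows [4j, ..., 4j + 3] of [Dmx a] (resp. [Nmx]) are the first four rows of
   [D5] (resp. [N5]), placed in columns [4j, ..., 4j + 4]; the last row of
   [Dmx a] is [a], that of [Nmx] is [0]. *)
Definition Dmx (a : 'rV['F_2]_n.+1) : 'M['F_2]_n.+1 :=
  \matrix_(i < n.+1) if (i < n)%N then e5 (i %% 4) *m D5 *m blk (4 * (i %/ 4)) else a.
Definition Nmx : 'M['F_2]_n.+1 :=
  \matrix_(i < n.+1) if (i < n)%N then e5 (i %% 4) *m N5 *m blk (4 * (i %/ 4)) else 0.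

Lemma e5_blk b l : (l < 5)%N -> e5 l *m blk b = e (b + l).
Proof. by move=> lt_l5; rewrite (e5E (Ordinal lt_l5)) -rowE rowK. Qed.

Lemma e_Dmx a m : (m <= n)%N ->
  e m *m Dmx a = if (m < n)%N then e5 (m %% 4) *m D5 *m blk (4 * (m %/ 4)) else a.
Proof. by move=> le_mn; rewrite -rowE rowK inordK. Qed.

Lemma e_Nmx m : (m <= n)%N ->
  e m *m Nmx = if (m < n)%N then e5 (m %% 4) *m N5 *m blk (4 * (m %/ 4)) else 0.
Proof. by move=> le_mn; rewrite -rowE rowK inordK. Qed.

Lemma e_blk m : (m < n)%N -> e m = e5 (m %% 4) *m I5 *m blk (4 * (m %/ 4)).
Proof.
have lt_r4 : (m %% 4 < 4)%N by rewrite ltn_mod.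
move=> lt_mn; rewrite e5_I5 // e5_blk; last exact: ltn_trans lt_r4 _.
by have <- : m = (4 * (m %/ 4) + m %% 4)%N by rewrite mulnC -divn_eq.
Qed.

Lemma divn4_addK j r :
  (r < 4)%N -> ((4 * j + r) %/ 4 = j)%N /\ ((4 * j + r) %% 4 = r)%N.
Proof. by move=> lt_r4; split; lia. Qed.

Lemma e_Nmx_blk j r : (j < k)%N -> (r < 4)%N ->
  e (4 * j + r) *m Nmx = e5 r *m N5 *m blk (4 * j).
Proof.
move=> lt_jk lt_r4; rewrite e_Nmx ?ifT; try lia.
by have [-> ->] := divn4_addK j lt_r4.
Qed.

Lemma e_Dmx_blk a j r : (j < k)%N -> (r < 4)%N ->
  e (4 * j + r) *m Dmx a = e5 r *m D5 *m blk (4 * j).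
Proof.
move=> lt_jk lt_r4; rewrite e_Dmx ?ifT; try lia.
by have [-> ->] := divn4_addK j lt_r4.
Qed.

Lemma blk_Nmx j : (j < k)%N -> blk (4 * j) *m Nmx = N5 *m blk (4 * j).
Proof.
move=> lt_jk; apply/row_matrixP => l; rewrite !row_mul rowK rowE -e5E.
case: (ltnP l 4) => [lt_l4 | ge_l4]; first exact: e_Nmx_blk.
have -> : nat_of_ord l = 4%N by have := ltn_ord l; lia.
rewrite e5_4_N5 mul0mx e_Nmx; last by lia.
case: ifP => // _; have -> : ((4 * j + 4) %% 4 = 0)%N by lia.
by rewrite e5_0_N5 mul0mx.
Qed.

Lemma blk_Dmx a j : (j < k)%N -> I5 *m blk (4 * j) *m Dmx a = D5 *m blk (4 * j).
Proof.
move=> lt_jk; apply/row_matrixP => l; rewrite !row_mul !rowE -e5E.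
case: (ltnP l 4) => [lt_l4 | ge_l4]; first by rewrite e5_I5 // e5_blk ?e_Dmx_blk.
have -> : nat_of_ord l = 4%N by have := ltn_ord l; lia.
by rewrite e5_4_I5 e5_4_D5 !mul0mx.
Qed.

Lemma Nmx_sqr : Nmx *m Nmx = 0.
Proof.
apply: row_inordP => m le_mn; rewrite mulmx0 mulmxA e_Nmx //.
case: ifP => [lt_mn | _]; last by rewrite mul0mx.
have lt_jk : (m %/ 4 < k)%N by lia.
by rewrite -mulmxA blk_Nmx // mulmxA -(mulmxA (e5 _)) N5_sqr mulmx0 mul0mx.
Qed.

Lemma Dmx_pow4 a : Dmx a ^+ 4 = Dmx a.
Proof.
apply: F2_mx_pow4 => i ne_in; rewrite rowE -(inord_val i).
have lt_in : (i < n)%N by move: ne_in (ltn_ord i); rewrite -val_eqE /=; lia.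
have lt_jk : (i %/ 4 < k)%N by lia.
have XD : I5 *m blk (4 * (i %/ 4)) *m Dmx a = D5 *m (I5 *m blk (4 * (i %/ 4))).
  by rewrite blk_Dmx // mulmxA D5I5.
rewrite e_blk // -(mulmxA (e5 _)) -mulmxA (horner_mx_intertwine _ XD) mulmxA.
by rewrite D5_rows_root ?ltn_mod // mul0mx.
Qed.

End BlockDecomposition.

Section KrylovBlocks.
Variables (k : nat) (B : 'M['F_2]_((4 * k).+1)) (v : 'rV['F_2]_((4 * k).+1)).
Local Notation n := (4 * k)%N.
Local Notation e m := (delta_mx 0 (inord m) : 'rV['F_2]_n.+1).
Local Notation P := (krylov_mx B v bpoly).

Lemma e_krylov m : (m <= n)%N -> e m *m P = v *m horner_mx B (bpoly m).
Proof. by move=> le_mn; rewrite -rowE rowK inordK. Qed.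

Lemma e5_blk_krylov j l : (j < k)%N -> (l < 5)%N ->
  e5 l *m (blk k (4 * j) *m P) = v *m horner_mx B (bpoly (4 * j + l)).
Proof. by move=> lt_jk lt_l5; rewrite mulmxA e5_blk // e_krylov //; lia. Qed.

Lemma krylov_mx_mulX : P \in unitmx ->
  P *m B = (Nmx k + Dmx (e n *m P *m B *m invmx P)) *m P.
Proof.
move=> Pu; set a := e n *m P *m B *m invmx P.
apply: row_inordP => m le_mn; rewrite !mulmxA mulmxDr.
case: (ltnP m n) => [lt_mn | ge_mn]; last first.
  have -> : m = n by apply/eqP; rewrite eqn_leq le_mn.
  by rewrite e_Nmx ?e_Dmx ?ltnn // add0r mulmxKV.
have [j [r [lt_r4 em]]] : exists j r, (r < 4)%N /\ m = (4 * j + r)%N.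
  by exists (m %/ 4)%N, (m %% 4)%N; rewrite ltn_mod mulnC -divn_eq.
subst m; have lt_jk : (j < k)%N by lia.
rewrite e_Nmx_blk ?e_Dmx_blk // -mulmxDl -mulmxDr N5D5 e_krylov; last by lia.
rewrite -!mulmxA -[B in v *m (_ *m B)]horner_mx_X -horner_mxM mulmxA.
case: r lt_r4 {le_mn lt_mn} => [|[|[|[|//]]]] _.
- by rewrite e5_0_X5 e5_blk_krylov // bpoly_mulX.
- by rewrite e5_1_X5 e5_blk_krylov // bpoly_mulX.
- by rewrite e5_2_X5 e5_blk_krylov // bpoly_mulX.
by rewrite e5_3_X5 mulmxDl !e5_blk_krylov // bpoly_mulX3 rmorphD mulmxDr addrC.
Qed.

End KrylovBlocks.

Theorem corollary2p10 (k : nat) (hk : (1 <= k)%N) (B : 'M['F_2]_((4 * k).+1)) :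
  non_derogative B ->
  exists N D : 'M['F_2]_((4 * k).+1),
    B = N + D /\ N ^+ 2 = 0 /\ D ^+ 4 = D.
Proof.
move=> nd; have [v v_cyclic] := row_ann_minpoly B.
set P := krylov_mx B v bpoly.
have Pu : P \in unitmx := krylov_mx_unit nd v_cyclic size_bpoly.
have BP := krylov_mx_mulX Pu.
set D := Dmx _ in BP.
exists (invmx P *m Nmx k *m P), (invmx P *m D *m P); split; [|split].
- by rewrite -mulmxDl -mulmxDr -mulmxA -BP mulKmx.
- by rewrite invmx_conj_exp // expr2 -mulmxE Nmx_sqr mulmx0 mul0mx.
- by rewrite (invmx_conj_exp D 4 Pu) Dmx_pow4.
Qed.
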